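(* Let $A$ be a commutative DGA and $\lambda=(0\to Z\to\widetilde L\xrightarrow{\pi}L\to0,\ Z\cong\mathbb{Q}[q])$ an MC-product data. Let $\alpha\in A^+\otimes L$ be a Maurer–Cartan element. Let $\tilde\alpha,\tilde\alpha_1\in A^+\otimes\widetilde L$ be two degree-one lifts of $\alpha$. Then $F(\tilde\alpha)$ and $F(\tilde\alpha_1)$, viewed as cocycles in $A^+\otimes Z\cong A^+[q]$, define the same cohomology class in $H^{2-q}(A)$. That is, this class depends only on $\alpha$.
   Context: All algebras are over $\mathbb{Q}$. A commutative DGA $(A,d)$ is a graded-commutative algebra $A=\bigoplus_{i\ge0}A^i$ with a degree $+1$ derivation $d$, $d^2=0$; $A^+=\bigoplus_{i>0}A^i$. A DGLA is a graded Lie algebra with a degree $+1$ differential which is a derivation. It is nilpotent if its lower central series terminates at $0$. For a DGLA $(L,d_L)$, $A\otimes L$ is the DGLA with total grading, bracket $[b_1\otimes w_1,b_2\otimes w_2]=(-1)^{|w_1||b_2|}b_1b_2\otimes[w_1,w_2]$ and differential $d(b\otimes w)=d_Ab\otimes w+(-1)^{|b|}b\otimes d_Lw$. For degree-one $\alpha$, $F(\alpha)=d\alpha+\tfrac12[\alpha,\alpha]$; $\alpha$ is Maurer–Cartan if $F(\alpha)=0$. An MC-product data consists of: - a central extension $0\to Z\to\widetilde L\xrightarrow{\pi}L\to0$ of nilpotent DGLAs (differentials $\tilde d_L$, $d_L$) concentrated in nonpositive degrees, with $Z\subseteq\ker\tilde d_L$ and $\operatorname{Im}\tilde d_L\cap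 Z=0$; - an isomorphism $Z\cong\mathbb{Q}[q]$ ($q\le0$). For a lift $\tilde\alpha$ of an MC element, $F(\tilde\alpha)\in A^+\otimes Z$ and it is a cocycle. *)

From HB Require Import structures.
From Stdlib Require List.
From mathcomp Require Import all_boot all_order all_algebra.
Set Implicit Arguments. Unset Strict Implicit. Unset Printing Implicit Defensive.
Import Order.TTheory GRing.Theory Num.Theory.
Local Open Scope ring_scope.

Definition graded_space (V : lmodType rat) (deg : int -> V -> Prop) : Prop :=
  [/\ (forall i, deg i 0),
      (forall i (c : rat) x y, deg i x -> deg i y -> deg i (c *: x + y)),
      (forall x : V, exists s : seq (int * V),
          (forall p, List.In p s -> deg p.1 p.2) /\ x = \sum_(p <- s) p.2)
    & (forall s : seq (int * V), uniq (map fst s) ->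
          (forall p, List.In p s -> deg p.1 p.2) ->
          \sum_(p <- s) p.2 = 0 -> forall p, List.In p s -> p.2 = 0)].

Definition sgn (n : int) : rat := (-1) ^+ `|n|%N.

Definition is_cdga (A : algType rat) (deg : int -> A -> Prop) (d : A -> A) : Prop :=
  graded_space deg /\
  (forall i (x : A), (i < 0)%R -> deg i x -> x = 0) /\
  deg 0 1 /\
  (forall i j (x y : A), deg i x -> deg j y -> deg (i + j) (x * y)) /\
  (forall i j (x y : A), deg i x -> deg j y -> x * y = sgn (i * j) *: (y * x)) /\
  (forall (c : rat) (x y : A), d (c *: x + y) = c *: d x + d y) /\
  (forall i (x : A), deg i x -> deg (i + 1) (d x)) /\
  (forall x : A, d (d x) = 0) /\
  (forall i (x y : A), deg i x -> d (x * y) = d x * y + sgn i *: (x * d y)).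

Definition is_dgla (L : lmodType rat) (deg : int -> L -> Prop)
    (br : L -> L -> L) (d : L -> L) : Prop :=
  graded_space deg /\
  (forall (c : rat) x y z, br (c *: x + y) z = c *: br x z + br y z) /\
  (forall (c : rat) x y z, br z (c *: x + y) = c *: br z x + br z y) /\
  (forall i j x y, deg i x -> deg j y -> deg (i + j) (br x y)) /\
  (forall i j x y, deg i x -> deg j y -> br x y = - (sgn (i * j) *: br y x)) /\
  (forall i j x y z, deg i x -> deg j y ->
      br x (br y z) = br (br x y) z + sgn (i * j) *: br y (br x z)) /\
  (forall (c : rat) x y, d (c *: x + y) = c *: d x + d y) /\
  (forall i x, deg i x -> deg (i + 1) (d x)) /\
  (forall x, d (d x) = 0) /\
  (forall i x y, deg i x -> d (br x y) = br (d x) y + sgn i *: br x (d y)).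

Definition nonpos_concentrated (L : lmodType rat) (deg : int -> L -> Prop) : Prop :=
  forall i x, (0 < i)%R -> deg i x -> x = 0.

Inductive brspan (L : lmodType rat) (br : L -> L -> L) (S : L -> Prop) : L -> Prop :=
  | brspan0 : brspan br S 0
  | brspan_br x y : S y -> brspan br S (br x y)
  | brspan_lin (c : rat) u v : brspan br S u -> brspan br S v -> brspan br S (c *: u + v).

Fixpoint lcs (L : lmodType rat) (br : L -> L -> L) (k : nat) : L -> Prop :=
  match k with
  | 0%N => fun _ => True
  | k'.+1 => brspan br (lcs br k')
  end.

Definition nilpotent (L : lmodType rat) (br : L -> L -> L) : Prop :=
  exists k, forall x, lcs br k x -> x = 0.

(* MC-product data: central extension 0 -> Z -> Lt -> L -> 0 (Z = ker pi) *)
(* of nilpotent DGLAs in nonpositive degrees, Z in ker dt, Im dt /\ Z = 0, *)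
(* and an isomorphism Z ~ Q[q] given by a generator z0 of Z in degree q. *)
Definition MC_product_data
    (Lt : lmodType rat) (degt : int -> Lt -> Prop) (brt : Lt -> Lt -> Lt) (dt : Lt -> Lt)
    (L : lmodType rat) (degL : int -> L -> Prop) (brL : L -> L -> L) (dL : L -> L)
    (pi : Lt -> L) (q : int) (z0 : Lt) : Prop :=
  [/\ (is_dgla degt brt dt /\ is_dgla degL brL dL /\ nilpotent brt /\ nilpotent brL /\
          nonpos_concentrated degt /\ nonpos_concentrated degL),
      [/\ (forall (c : rat) x y, pi (c *: x + y) = c *: pi x + pi y),
          (forall i x, degt i x -> degL i (pi x)),
          (forall x y, pi (brt x y) = brL (pi x) (pi y)),
          (forall x, pi (dt x) = dL (pi x))
        & (forall y, exists x, pi x = y)],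
      [/\ (forall z x, pi z = 0 -> brt z x = 0 /\ brt x z = 0),
          (forall z, pi z = 0 -> dt z = 0)
        & (forall x, pi (dt x) = 0 -> dt x = 0)]
    &
      [/\ (q <= 0)%R, z0 != 0, degt q z0
        & (forall z, pi z = 0 <-> exists c : rat, z = c *: z0)]].

(* Tensor product A (x) L of graded spaces, as formal sums of           *)
(* homogeneous pure tensors  a (x) w  (a in A^i, w in L^j), modulo the    *)
(* equality of the tensor product: two formal sums are equal iff every   *)
(* family of bilinear maps A^i x L^j -> W takes the same value on them.  *)
Record tm (A L : Type) := Tm { tdA : int; ta : A; tdL : int; tl : L }.

Definition tensor_wf (A L : Type) (degA : int -> A -> Prop) (degL : int -> L -> Prop)
    (s : seq (tm A L)) : Prop :=
  forall x, List.In x s -> degA (tdA x) (ta x) /\ degL (tdL x) (tl x).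

Definition bilin_fam (A L W : lmodType rat) (degA : int -> A -> Prop) (degL : int -> L -> Prop)
    (f : int -> int -> A -> L -> W) : Prop :=
  forall i j,
    (forall (c : rat) a1 a2 w, degA i a1 -> degA i a2 -> degL j w ->
        f i j (c *: a1 + a2) w = c *: f i j a1 w + f i j a2 w) /\
    (forall (c : rat) a w1 w2, degA i a -> degL j w1 -> degL j w2 ->
        f i j a (c *: w1 + w2) = c *: f i j a w1 + f i j a w2).

Definition teval (A L W : lmodType rat) (f : int -> int -> A -> L -> W) (s : seq (tm A L)) : W :=
  \sum_(x <- s) f (tdA x) (tdL x) (ta x) (tl x).

Definition teq (A L : lmodType rat) (degA : int -> A -> Prop) (degL : int -> L -> Prop)
    (s t : seq (tm A L)) : Prop :=
  forall (W : lmodType rat) (f : int -> int -> A -> L -> W),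
    bilin_fam degA degL f -> teval f s = teval f t.

Definition tmap (A L M : Type) (p : L -> M) (s : seq (tm A L)) : seq (tm A M) :=
  map (fun x => Tm (tdA x) (ta x) (tdL x) (p (tl x))) s.

Definition tdiff (A : algType rat) (L : lmodType rat) (dA : A -> A) (dL : L -> L)
    (s : seq (tm A L)) : seq (tm A L) :=
  flatten (map (fun x => [:: Tm (tdA x + 1) (dA (ta x)) (tdL x) (tl x);
                             Tm (tdA x) (sgn (tdA x) *: ta x) (tdL x + 1) (dL (tl x))]) s).

Definition tbr (A : algType rat) (L : lmodType rat) (br : L -> L -> L)
    (s t : seq (tm A L)) : seq (tm A L) :=
  [seq Tm (tdA x + tdA y) (sgn (tdL x * tdA y) *: (ta x * ta y))
          (tdL x + tdL y) (br (tl x) (tl y)) | x <- s, y <- t].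

Definition tscale (A : lmodType rat) (L : Type) (c : rat) (s : seq (tm A L)) : seq (tm A L) :=
  map (fun x => Tm (tdA x) (c *: ta x) (tdL x) (tl x)) s.

Definition MCF (A : algType rat) (L : lmodType rat) (dA : A -> A) (br : L -> L -> L)
    (dL : L -> L) (s : seq (tm A L)) : seq (tm A L) :=
  tdiff dA dL s ++ tscale (1 / 2) (tbr br s s).

Definition deg1_plus (A L : Type) (s : seq (tm A L)) : Prop :=
  forall x, List.In x s -> (0 < tdA x)%R /\ tdA x + tdL x = 1.

From HB Require Import structures.
From mathcomp Require Import all_boot all_order all_algebra.
From mathcomp Require Import classical_sets.
From Stdlib Require Import ClassicalEpsilon.
Import GRing.Theory.
Local Open Scope ring_scope.
Set Implicit Arguments. Unset Strict Implicit.

(* Over Q, tensoring with A is exact.  Concretely, a linear functional on Lt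
   with value 1 at z0 and homogeneous lifts along pi give, in each degree, a
   linear section of pi which is the identity up to the z0-component; hence a
   homogeneous tensor killed by id (x) pi has the form c (x) z0.  Since
   id (x) pi commutes with F and F(alpha) = 0, F(alphat) = c (x) z0.  Two lifts
   differ by some b (x) z0, and as z0 is central with dt z0 = 0,
   F(alphat1 + b (x) z0) = F(alphat1) + dA b (x) z0, whence c = c1 + dA b. *)

Lemma InP (T : eqType) (x : T) (s : seq T) : reflect (List.In x s) (x \in s).
Proof.
elim: s => [|y s IH] /=; first by right.
by rewrite inE; apply: (iffP orP) => [[/eqP ->|/IH]|[->|/IH]]; auto; rewrite eqxx; left.
Qed.

Lemma eq_bigr_In (I : Type) (V : nmodType) (r : seq I) (F G : I -> V) :
  (forall x, List.In x r -> F x = G x) -> \sum_(x <- r) F x = \sum_(x <- r) G x.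
Proof.
elim: r => [|x r IH] FG; first by rewrite !big_nil.
by rewrite !big_cons FG ?IH //; [move=> y yr; apply: FG; right | left].
Qed.

Lemma big1_In (I : Type) (V : nmodType) (r : seq I) (F : I -> V) :
  (forall x, List.In x r -> F x = 0) -> \sum_(x <- r) F x = 0.
Proof. by move=> F0; rewrite (eq_bigr_In F0) big1. Qed.

Lemma In_allpairs (I J K : Type) (h : I -> J -> K) (s : seq I) (t : seq J) z :
  List.In z [seq h x y | x <- s, y <- t] ->
  exists x y, [/\ List.In x s, List.In y t & z = h x y].
Proof.
elim: s => [|x s IH] //= z_in; case: (List.in_app_or _ _ _ z_in).
  by move=> /List.in_map_iff [y [<- yt]]; exists x, y; split => //; left.
by move=> /IH [x' [y [x's yt ->]]]; exists x', y; split => //; right.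
Qed.

Section LinearMaps.
Variables (U V : lmodType rat) (f : U -> V).
Hypothesis f_lin : forall (c : rat) x y, f (c *: x + y) = c *: f x + f y.

Definition linear_of : {linear U -> V} :=
  HB.pack_for {linear U -> V} f (GRing.isLinear.Build rat U V *:%R f f_lin).

Lemma lin_sum (I : Type) (r : seq I) (P : pred I) (F : I -> U) :
  f (\sum_(i <- r | P i) F i) = \sum_(i <- r | P i) f (F i).
Proof. exact: (raddf_sum linear_of). Qed.

Lemma linB x y : f (x - y) = f x - f y.
Proof. exact: (raddfB linear_of). Qed.

End LinearMaps.

Section GradedSpaces.
Variables (V : lmodType rat) (deg : int -> V -> Prop).
Hypothesis deg_graded : graded_space deg.

Lemma deg0 i : deg i 0.
Proof. by case: deg_graded. Qed.

Lemma deg_lin i (c : rat) x y : deg i x -> deg i y -> deg i (c *: x + y).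
Proof. by case: deg_graded => _ lin _ _; apply: lin. Qed.

Lemma degD i x y : deg i x -> deg i y -> deg i (x + y).
Proof. by move=> dx dy; have := deg_lin 1 dx dy; rewrite scale1r. Qed.

Lemma degZ i (c : rat) x : deg i x -> deg i (c *: x).
Proof. by move=> dx; have := deg_lin c dx (deg0 i); rewrite addr0. Qed.

Lemma degN i x : deg i x -> deg i (- x).
Proof. by move=> dx; rewrite -scaleN1r; apply: degZ. Qed.

Lemma degB i x y : deg i x -> deg i y -> deg i (x - y).
Proof. by move=> dx dy; apply/degD/degN. Qed.

Lemma deg_sum i (I : Type) (r : seq I) (P : pred I) (F : I -> V) :
  (forall x, List.In x r -> P x -> deg i (F x)) -> deg i (\sum_(x <- r | P x) F x).
Proof.
elim: r => [|x r IH] dF; first by rewrite big_nil; apply: deg0.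
rewrite big_cons; have dr := IH (fun y yr => dF y (or_intror yr)).
by case: ifP => // Px; apply: degD => //; apply: dF => //; left.
Qed.

Lemma homog_eq0 i j v : deg i v -> deg j v -> i != j -> v = 0.
Proof.
move=> di dj neq_ij; case: deg_graded => _ _ _ indep.
have dvs p : List.In p [:: (i, v); (j, - v)] -> deg p.1 p.2.
  by move=> [<-|[<-|[]]] //=; apply: degN.
apply: (indep _ _ dvs _ (i, v)); last by left.
- by rewrite /= inE (negPf neq_ij).
- by rewrite big_cons big_seq1 subrr.
Qed.

Lemma sum_homog_components (l : seq int) (s : seq (int * V)) :
  (forall p, List.In p s -> p.1 \in l) ->
  \sum_(i <- undup l) \sum_(p <- s | p.1 == i) p.2 = \sum_(p <- s) p.2.
Proof.
move=> sl; rewrite (exchange_big_dep predT) //=; apply: eq_bigr_In => p /sl pl.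
rewrite -big_filter.
have -> : [seq i <- undup l | true && (p.1 == i)] = [:: p.1].
  rewrite -(filter_pred1_uniq (undup_uniq l) (x := p.1)) ?mem_undup //.
  by apply: eq_filter => i /=; rewrite eq_sym.
by rewrite big_seq1.
Qed.

(* The direct-sum axiom only applies to families with distinct degrees,
   hence the regrouping by degree. *)
Lemma homog_component_eq0 (s : seq (int * V)) :
  (forall p, List.In p s -> deg p.1 p.2) -> \sum_(p <- s) p.2 = 0 ->
  forall j, \sum_(p <- s | p.1 == j) p.2 = 0.
Proof.
move=> ds s0 j; case: deg_graded => _ _ _ indep.
pose t := [seq (i, \sum_(p <- s | p.1 == i) p.2) | i <- undup (map fst s)].
have t_uniq : uniq (map fst t) by rewrite -map_comp map_id undup_uniq.
have dt p : List.In p t -> deg p.1 p.2.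
  by move=> /List.in_map_iff [i [<- _]] /=; apply: deg_sum => x xs /eqP <-; apply: ds.
have t0 : \sum_(p <- t) p.2 = 0.
  by rewrite big_map sum_homog_components // => p /InP ps; apply: map_f.
have [js|jNs] := boolP (j \in map fst s).
  apply: (indep t t_uniq dt t0 (j, _)).
  by apply/List.in_map_iff; exists j; split => //; apply/InP; rewrite mem_undup.
rewrite big_seq_cond big1 // => p /andP [ps /eqP pj].
by move: jNs; rewrite -pj map_f.
Qed.

End GradedSpaces.

Section HomogeneousLift.
Variables (U V : lmodType rat) (degU : int -> U -> Prop) (degV : int -> V -> Prop).
Variable p : U -> V.
Hypotheses (U_graded : graded_space degU) (V_graded : graded_space degV).
Hypothesis p_lin : forall (c : rat) x y, p (c *: x + y) = c *: p x + p y.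
Hypothesis p_deg : forall i x, degU i x -> degV i (p x).
Hypothesis p_surj : forall y, exists x, p x = y.

(* The degree-j component of any preimage of y is a homogeneous preimage. *)
Lemma homog_lift j y : degV j y -> exists x, degU j x /\ p x = y.
Proof.
move=> dy; have [x px] := p_surj y.
case: U_graded => _ _ decomp _; have [s [ds sx]] := decomp x; rewrite {}sx in px.
exists (\sum_(e <- s | e.1 == j) e.2); split.
  by apply: deg_sum => // e es /eqP <-; apply: ds.
pose s' := (j, - y) :: [seq (e.1, p e.2) | e <- s].
have ds' e : List.In e s' -> degV e.1 e.2.
  by move=> [<-|/List.in_map_iff [e' [<- e's]]] /=; [apply: degN | apply/p_deg/ds].
have := homog_component_eq0 V_graded ds'.
rewrite big_cons big_map /= -lin_sum // px addNr => /(_ erefl j).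
rewrite big_cons /= eqxx big_map /= -lin_sum // => /eqP.
by rewrite addrC subr_eq0 => /eqP.
Qed.

End HomogeneousLift.

Lemma teval_cat (A L W : lmodType rat) (f : int -> int -> A -> L -> W) (s t : seq (tm A L)) :
  teval f (s ++ t) = teval f s + teval f t.
Proof. exact: big_cat. Qed.

Lemma teval_seq1 (A L W : lmodType rat) (f : int -> int -> A -> L -> W) (x : tm A L) :
  teval f [:: x] = f (tdA x) (tdL x) (ta x) (tl x).
Proof. exact: big_seq1. Qed.

Section BilinearFamilies.
Variables (A L W : lmodType rat) (degA : int -> A -> Prop) (degL : int -> L -> Prop).
Hypotheses (A_graded : graded_space degA) (L_graded : graded_space degL).
Variable f : int -> int -> A -> L -> W.
Hypothesis f_bil : bilin_fam degA degL f.

Lemma bf0l i j w : degL j w -> f i j 0 w = 0.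
Proof.
move=> dw; have := (f_bil i j).1 1 0 0 w (deg0 A_graded i) (deg0 A_graded i) dw.
by rewrite !scale1r addr0 => /esym/(canRL (addrK _)); rewrite subrr.
Qed.

Lemma bf0r i j a : degA i a -> f i j a 0 = 0.
Proof.
move=> da; have := (f_bil i j).2 1 a 0 0 da (deg0 L_graded j) (deg0 L_graded j).
by rewrite !scale1r addr0 => /esym/(canRL (addrK _)); rewrite subrr.
Qed.

Lemma bfDl i j a1 a2 w : degA i a1 -> degA i a2 -> degL j w ->
  f i j (a1 + a2) w = f i j a1 w + f i j a2 w.
Proof. by move=> d1 d2 dw; have := (f_bil i j).1 1 a1 a2 w d1 d2 dw; rewrite !scale1r. Qed.

Lemma bfZl i j c a w : degA i a -> degL j w -> f i j (c *: a) w = c *: f i j a w.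
Proof.
move=> da dw; have := (f_bil i j).1 c a 0 w da (deg0 A_graded i) dw.
by rewrite !addr0 bf0l // addr0.
Qed.

Lemma bfZr i j c a w : degA i a -> degL j w -> f i j a (c *: w) = c *: f i j a w.
Proof.
move=> da dw; have := (f_bil i j).2 c a w 0 da dw (deg0 L_graded j).
by rewrite !addr0 bf0r // addr0.
Qed.

Lemma bfBr i j a w1 w2 : degA i a -> degL j w1 -> degL j w2 ->
  f i j a (w1 - w2) = f i j a w1 - f i j a w2.
Proof.
move=> da d1 d2; have := (f_bil i j).2 (-1) a w2 w1 da d2 d1.
by rewrite !scaleN1r addrC => ->; rewrite addrC.
Qed.

Lemma bf_suml i j (I : Type) (r : seq I) (P : pred I) (F : I -> A) w :
  (forall x, List.In x r -> P x -> degA i (F x)) -> degL j w ->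
  f i j (\sum_(x <- r | P x) F x) w = \sum_(x <- r | P x) f i j (F x) w.
Proof.
move=> dF dw; elim: r dF => [|x r IH] dF; first by rewrite !big_nil bf0l.
have dF' y : List.In y r -> P y -> degA i (F y) by move=> yr; apply: dF; right.
rewrite !big_cons; case: ifP => Px; last exact: IH.
rewrite bfDl ?IH //; first by apply: dF => //; left.
exact: deg_sum.
Qed.

Lemma teval_tscale c (s : seq (tm A L)) : tensor_wf degA degL s ->
  teval f (tscale c s) = c *: teval f s.
Proof.
rewrite /teval big_map scaler_sumr => s_wf; apply: eq_bigr_In => x xs /=.
by have [da dl] := s_wf x xs; rewrite bfZl.
Qed.

End BilinearFamilies.

Lemma bilin_fam_sum (A L W : lmodType rat) (degA : int -> A -> Prop) (degL : int -> L -> Prop)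
    (I : Type) (r : seq I) (G : I -> int -> int -> A -> L -> W) :
  (forall y, List.In y r -> bilin_fam degA degL (G y)) ->
  bilin_fam degA degL (fun i j a w => \sum_(y <- r) G y i j a w).
Proof.
move=> G_bil i j; split=> [c a1 a2 w d1 d2 dw | c a w1 w2 da d1 d2];
  rewrite scaler_sumr -big_split; apply: eq_bigr_In => y yr /=.
  by rewrite (G_bil y yr i j).1.
by rewrite (G_bil y yr i j).2.
Qed.

Definition thomog (A L : Type) (n : int) (s : seq (tm A L)) : Prop :=
  forall x, List.In x s -> tdA x + tdL x = n.

Lemma thomog_deg1 (A L : Type) (s : seq (tm A L)) : deg1_plus s -> thomog 1 s.
Proof. by move=> s1 x /s1 []. Qed.

Section TensorBookkeeping.
Variables (A L : lmodType rat) (degA : int -> A -> Prop) (degL : int -> L -> Prop).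
Implicit Types (s t u : seq (tm A L)).

Lemma teq_refl s : teq degA degL s s.
Proof. by []. Qed.

Lemma teq_sym s t : teq degA degL s t -> teq degA degL t s.
Proof. by move=> st W f f_bil; rewrite (st W f f_bil). Qed.

Lemma teq_trans s t u : teq degA degL s t -> teq degA degL t u -> teq degA degL s u.
Proof. by move=> st tu W f f_bil; rewrite (st W f f_bil) (tu W f f_bil). Qed.

Lemma teq_cat s s' t t' : teq degA degL s s' -> teq degA degL t t' ->
  teq degA degL (s ++ t) (s' ++ t').
Proof. by move=> ss' tt' W f f_bil; rewrite !teval_cat (ss' W f f_bil) (tt' W f f_bil). Qed.

Lemma wf_cat s t : tensor_wf degA degL s -> tensor_wf degA degL t ->
  tensor_wf degA degL (s ++ t).
Proof. by move=> s_wf t_wf x /(List.in_app_or s t x) [/s_wf|/t_wf]. Qed.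

Lemma wf_tscale c s : graded_space degA -> tensor_wf degA degL s ->
  tensor_wf degA degL (tscale c s).
Proof.
move=> A_graded s_wf x /List.in_map_iff [y [<- ys]] /=.
by have [da dl] := s_wf y ys; split => //; apply: degZ.
Qed.

Lemma thomog_cat n s t : thomog n s -> thomog n t -> thomog n (s ++ t).
Proof. by move=> sn tn x /(List.in_app_or s t x) [/sn|/tn]. Qed.

Lemma thomog_tscale n c s : thomog n s -> thomog n (tscale c s).
Proof. by move=> sn x /List.in_map_iff [y [<- ys]] /=; apply: sn. Qed.

Lemma teq_pure_tensorD i j a b w : graded_space degA -> graded_space degL ->
  degA i a -> degA i b -> degL j w ->
  teq degA degL [:: Tm i a j w; Tm i b j w] [:: Tm i (a + b) j w].
Proof.
move=> A_graded L_graded da db dw W f f_bil.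
by rewrite /teval big_cons !big_seq1 /= (bfDl f_bil).
Qed.

End TensorBookkeeping.

Section ChangeOfCoefficients.
Variables (A : algType rat) (Lt L : lmodType rat) (pi : Lt -> L).
Implicit Types (s t : seq (tm A Lt)).

Lemma tmap_cat s t : tmap pi (s ++ t) = tmap pi s ++ tmap pi t.
Proof. exact: map_cat. Qed.

Lemma tmap_tscale c s : tmap pi (tscale c s) = tscale c (tmap pi s).
Proof. by elim: s => //= x s ->. Qed.

Lemma tmap_tdiff dA dt dL s : (forall x, pi (dt x) = dL (pi x)) ->
  tmap pi (tdiff dA dt s) = tdiff dA dL (tmap pi s).
Proof. by move=> pi_d; elim: s => //= x s ->; rewrite pi_d. Qed.

Lemma tmap_tbr brt brL s t : (forall x y, pi (brt x y) = brL (pi x) (pi y)) ->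
  tmap pi (tbr brt s t) = tbr brL (tmap pi s) (tmap pi t).
Proof.
move=> pi_br; rewrite /tbr /tmap map_allpairs allpairs_mapl allpairs_mapr.
by apply: eq_allpairs => x y /=; rewrite pi_br.
Qed.

Lemma tmap_MCF dA dt dL brt brL s :
  (forall x, pi (dt x) = dL (pi x)) -> (forall x y, pi (brt x y) = brL (pi x) (pi y)) ->
  tmap pi (MCF dA brt dt s) = MCF dA brL dL (tmap pi s).
Proof.
by move=> pi_d pi_br; rewrite tmap_cat (tmap_tdiff _ _ pi_d) tmap_tscale (tmap_tbr _ _ pi_br).
Qed.

Lemma wf_tmap (degA : int -> A -> Prop) degt degL s :
  (forall i x, degt i x -> degL i (pi x)) ->
  tensor_wf degA degt s -> tensor_wf degA degL (tmap pi s).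
Proof.
move=> pi_deg s_wf x /List.in_map_iff [y [<- ys]] /=.
by have [da dl] := s_wf y ys; split => //; apply: pi_deg.
Qed.

End ChangeOfCoefficients.

Section Projections.
Variables (A : algType rat) (degA : int -> A -> Prop) (dA : A -> A).
Variables (L : lmodType rat) (degL : int -> L -> Prop) (br : L -> L -> L) (dL : L -> L).

Lemma cdga_graded : is_cdga degA dA -> graded_space degA.
Proof. by case. Qed.

Lemma cdga_degM : is_cdga degA dA ->
  forall i j (x y : A), degA i x -> degA j y -> degA (i + j) (x * y).
Proof. by case=> _ [_ [_ []]]. Qed.

Lemma cdga_d_lin : is_cdga degA dA -> forall (c : rat) x y, dA (c *: x + y) = c *: dA x + dA y.
Proof. by case=> _ [_ [_ [_ [_ []]]]]. Qed.

Lemma cdga_d_deg : is_cdga degA dA -> forall i x, degA i x -> degA (i + 1) (dA x).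
Proof. by case=> _ [_ [_ [_ [_ [_ []]]]]]. Qed.

Lemma dgla_graded : is_dgla degL br dL -> graded_space degL.
Proof. by case. Qed.

Lemma dgla_br_linl : is_dgla degL br dL ->
  forall (c : rat) x y z, br (c *: x + y) z = c *: br x z + br y z.
Proof. by case=> _ []. Qed.

Lemma dgla_br_linr : is_dgla degL br dL ->
  forall (c : rat) x y z, br z (c *: x + y) = c *: br z x + br z y.
Proof. by case=> _ [_ []]. Qed.

Lemma dgla_br_deg : is_dgla degL br dL ->
  forall i j x y, degL i x -> degL j y -> degL (i + j) (br x y).
Proof. by case=> _ [_ [_ []]]. Qed.

Lemma dgla_d_lin : is_dgla degL br dL -> forall (c : rat) x y, dL (c *: x + y) = c *: dL x + dL y.
Proof. by case=> _ [_ [_ [_ [_ [_ []]]]]]. Qed.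

Lemma dgla_d_deg : is_dgla degL br dL -> forall i x, degL i x -> degL (i + 1) (dL x).
Proof. by case=> _ [_ [_ [_ [_ [_ [_ []]]]]]]. Qed.

End Projections.

Section Curvature.
Variables (A : algType rat) (degA : int -> A -> Prop) (dA : A -> A).
Variables (L : lmodType rat) (degL : int -> L -> Prop) (br : L -> L -> L) (dL : L -> L).
Hypotheses (A_cdga : is_cdga degA dA) (L_dgla : is_dgla degL br dL).
Implicit Types (s t : seq (tm A L)).

Let A_graded := cdga_graded A_cdga.
Let L_graded := dgla_graded L_dgla.
Let degM := cdga_degM A_cdga.
Let dA_lin := cdga_d_lin A_cdga.
Let dA_deg := cdga_d_deg A_cdga.
Let br_linl := dgla_br_linl L_dgla.
Let br_linr := dgla_br_linr L_dgla.
Let br_deg := dgla_br_deg L_dgla.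
Let dL_lin := dgla_d_lin L_dgla.
Let dL_deg := dgla_d_deg L_dgla.

Lemma degZM i j (c : rat) (a b : A) : degA i a -> degA j b -> degA (i + j) (c *: (a * b)).
Proof. by move=> da db; apply: (degZ A_graded); apply: degM. Qed.

Lemma wf_tdiff s : tensor_wf degA degL s -> tensor_wf degA degL (tdiff dA dL s).
Proof.
elim: s => [|x s IH] s_wf //=; have [da dl] := s_wf x (or_introl erefl).
move=> y [<-|[<-|/IH]] /=; first by split => //; apply: dA_deg.
  by split; [apply: (degZ A_graded) | apply: dL_deg].
by apply=> z zs; apply: s_wf; right.
Qed.

Lemma wf_tbr s t : tensor_wf degA degL s -> tensor_wf degA degL t ->
  tensor_wf degA degL (tbr br s t).
Proof.
move=> s_wf t_wf z z_in; have [x [y [xs yt ->]]] := In_allpairs z_in.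
have [dax dlx] := s_wf x xs; have [day dly] := t_wf y yt.
by split; [apply: degZM | apply: br_deg].
Qed.

Lemma wf_MCF s : tensor_wf degA degL s -> tensor_wf degA degL (MCF dA br dL s).
Proof.
by move=> s_wf; apply: wf_cat; [apply: wf_tdiff | apply: (wf_tscale A_graded); apply: wf_tbr].
Qed.

Lemma thomog_MCF s : thomog 1 s -> thomog 2 (MCF dA br dL s).
Proof.
move=> s1; apply: thomog_cat; last first.
  apply: thomog_tscale => z z_in; have [x [y [/s1 x1 /s1 y1 ->]]] := In_allpairs z_in.
  by rewrite /= addrACA x1 y1.
elim: s s1 => [|x s IH] s1 //= y; have x1 := s1 x (or_introl erefl).
move=> [<-|[<-|]] /=; first by rewrite addrAC x1.
  by rewrite addrA x1.
by apply: IH => z zs; apply: s1; right.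
Qed.

Lemma tdiff_cat s t : tdiff dA dL (s ++ t) = tdiff dA dL s ++ tdiff dA dL t.
Proof. by rewrite /tdiff map_cat flatten_cat. Qed.

Lemma teval_tbr (W : lmodType rat) (f : int -> int -> A -> L -> W) s t :
  teval f (tbr br s t) = \sum_(x <- s) \sum_(y <- t)
    f (tdA x + tdA y) (tdL x + tdL y) (sgn (tdL x * tdA y) *: (ta x * ta y)) (br (tl x) (tl y)).
Proof. exact: big_allpairs_dep. Qed.

Section Congruence.
Variables (W : lmodType rat) (f : int -> int -> A -> L -> W).
Hypothesis f_bil : bilin_fam degA degL f.

Lemma bilin_fam_tdiff :
  bilin_fam degA degL (fun i j a w => f (i + 1) j (dA a) w + f i (j + 1) (sgn i *: a) (dL w)).
Proof.
move=> i j; split=> [c a1 a2 w d1 d2 dw | c a w1 w2 da d1 d2] /=.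
  rewrite dA_lin scalerDr scalerA mulrC -scalerA.
  rewrite (f_bil _ _).1 ?(f_bil _ _).1 //;
    try by [apply: dA_deg | apply: dL_deg | apply: (degZ A_graded)].
  by rewrite scalerDr addrACA.
rewrite dL_lin (f_bil _ _).2 ?(f_bil _ _).2 //;
  try by [apply: dA_deg | apply: dL_deg | apply: (degZ A_graded)].
by rewrite scalerDr addrACA.
Qed.

Lemma bilin_fam_tbr_r t : tensor_wf degA degL t ->
  bilin_fam degA degL (fun i j a w => \sum_(y <- t)
    f (i + tdA y) (j + tdL y) (sgn (j * tdA y) *: (a * ta y)) (br w (tl y))).
Proof.
move=> t_wf; apply: bilin_fam_sum => y /t_wf [day dly] i j.
split=> [c a1 a2 w d1 d2 dw | c a w1 w2 da d1 d2] /=.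
  rewrite mulrDl -scalerAl scalerDr scalerA mulrC -scalerA (f_bil _ _).1 //;
    by [apply: degZM | apply: br_deg].
by rewrite br_linl (f_bil _ _).2 //; [apply: degZM | apply: br_deg | apply: br_deg].
Qed.

Lemma bilin_fam_tbr_l s : tensor_wf degA degL s ->
  bilin_fam degA degL (fun i j a w => \sum_(x <- s)
    f (tdA x + i) (tdL x + j) (sgn (tdL x * i) *: (ta x * a)) (br (tl x) w)).
Proof.
move=> s_wf; apply: bilin_fam_sum => x /s_wf [dax dlx] i j.
split=> [c a1 a2 w d1 d2 dw | c a w1 w2 da d1 d2] /=.
  rewrite mulrDr -scalerAr scalerDr scalerA mulrC -scalerA (f_bil _ _).1 //;
    by [apply: degZM | apply: br_deg].
by rewrite br_linr (f_bil _ _).2 //; [apply: degZM | apply: br_deg | apply: br_deg].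
Qed.

End Congruence.

Lemma teval_tdiff (W : lmodType rat) (f : int -> int -> A -> L -> W) s :
  teval f (tdiff dA dL s) =
  teval (fun i j a w => f (i + 1) j (dA a) w + f i (j + 1) (sgn i *: a) (dL w)) s.
Proof.
rewrite /teval /tdiff big_flatten big_map; apply: eq_bigr => x _.
by rewrite big_cons big_seq1.
Qed.

Lemma teq_tdiff s s' : teq degA degL s s' -> teq degA degL (tdiff dA dL s) (tdiff dA dL s').
Proof. by move=> ss' W f f_bil; rewrite !teval_tdiff; apply/ss'/bilin_fam_tdiff. Qed.

Lemma teq_tbr s s' t t' : tensor_wf degA degL s' -> tensor_wf degA degL t ->
  teq degA degL s s' -> teq degA degL t t' -> teq degA degL (tbr br s t) (tbr br s' t').
Proof.
move=> s'_wf t_wf ss' tt' W f f_bil; rewrite !teval_tbr.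
move: (ss' W _ (bilin_fam_tbr_r f_bil t_wf)); rewrite /teval /= => ->.
rewrite (exchange_big _ s' t) (exchange_big _ s' t') /=.
by move: (tt' W _ (bilin_fam_tbr_l f_bil s'_wf)); rewrite /teval /= => ->.
Qed.

Lemma teq_MCF s s' : tensor_wf degA degL s -> tensor_wf degA degL s' ->
  teq degA degL s s' -> teq degA degL (MCF dA br dL s) (MCF dA br dL s').
Proof.
move=> s_wf s'_wf ss' W f f_bil.
rewrite !teval_cat !(teval_tscale A_graded f_bil); try exact: wf_tbr.
by congr (_ + _ *: _); [apply: teq_tdiff | apply: teq_tbr].
Qed.

Lemma MCF_cat_central s i b j z :
  tensor_wf degA degL s -> degA i b -> degL j z ->
  dL z = 0 -> (forall x, br z x = 0 /\ br x z = 0) ->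
  teq degA degL (MCF dA br dL (s ++ [:: Tm i b j z]))
                (MCF dA br dL s ++ [:: Tm (i + 1) (dA b) j z]).
Proof.
move=> s_wf db dz dz0 z_central W f f_bil.
set t := [:: Tm i b j z].
have st_wf : tensor_wf degA degL (s ++ t) by apply: wf_cat => // x [<-|[]].
have tdiff_t : teval f (tdiff dA dL t) = f (i + 1) j (dA b) z.
  rewrite teval_tdiff teval_seq1 /= dz0 (bf0r L_graded f_bil) ?addr0 //.
  exact: (degZ A_graded).
have tbr_st : teval f (tbr br (s ++ t) (s ++ t)) = teval f (tbr br s s).
  rewrite !teval_tbr big_cat big_seq1 /= [X in _ + X]big1_In ?addr0; last first.
    move=> y /st_wf [day dly]; rewrite (z_central _).1 (bf0r L_graded f_bil) //.
    exact: degZM.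
  apply: eq_bigr_In => x /s_wf [dax dlx].
  rewrite big_cat big_seq1 /= (z_central _).2 (bf0r L_graded f_bil) ?addr0 //.
  exact: degZM.
rewrite /MCF tdiff_cat !teval_cat !(teval_tscale A_graded f_bil); try exact: wf_tbr.
by rewrite tbr_st tdiff_t teval_seq1 [teval f [::]]big_nil addr0 addrAC.
Qed.

End Curvature.

Section LinearFunctional.
Variables (V : lmodType rat) (z0 : V).
Hypothesis z0_neq0 : z0 != 0.

Definition lin_closed (X : set V) := forall (c : rat) x y, X x -> X y -> X (c *: x + y).

Definition avoiding_subspace (X : set V) := lin_closed X /\ ~ X z0.

Lemma maximal_avoiding_subspace_complement M :
  avoiding_subspace M -> (forall B, (M `<` B)%classic -> ~ avoiding_subspace B) ->
  M 0 /\ forall v, exists k : rat, M (v - k *: z0).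
Proof.
move=> [M_lin Mz0] M_max.
have M0 : M 0.
  apply: NNPP => M0; apply: (M_max (fun x => x = 0)); first split.
  - move=> m Mm; case: M0; have := M_lin (-1) m m Mm Mm; by rewrite scaleN1r addNr.
  - by move/(_ 0 erefl).
  split; first by move=> c x y /= -> ->; rewrite scaler0 addr0.
  by move=> /= z00; move: z0_neq0; rewrite z00 eqxx.
split=> // v; apply: NNPP => Nv.
have MZ (c : rat) x : M x -> M (c *: x) by move=> Mx; have := M_lin c x 0 Mx M0; rewrite addr0.
pose B w := exists m (k : rat), M m /\ w = m + k *: v.
apply: (M_max B); first split.
- by move=> m Mm; exists m, 0; rewrite scale0r addr0.
- move=> BM; apply: Nv; exists 0; rewrite scale0r subr0; apply: BM.
  by exists 0, 1; rewrite scale1r add0r.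
split.
  move=> c _ _ [m1 [k1 [M1 ->]]] [m2 [k2 [M2 ->]]].
  exists (c *: m1 + m2), (c * k1 + k2); split; first exact: M_lin.
  by rewrite scalerDr scalerDl scalerA addrACA.
move=> [m [k [Mm z0_eq]]]; have [k0|k_neq0] := eqVneq k 0.
  by apply: Mz0; rewrite z0_eq k0 scale0r addr0.
apply: Nv; exists k^-1.
suff -> : v - k^-1 *: z0 = (- k^-1) *: m by apply: MZ.
by rewrite z0_eq scalerDr scalerA mulVf // scale1r opprD addrCA subrr addr0 scaleNr.
Qed.

(* A linear complement of the line through z0, obtained by Zorn's lemma,
   gives the coordinate along z0. *)
Lemma exists_linear_functional :
  exists phi : V -> rat, (forall (c : rat) x y, phi (c *: x + y) = c * phi x + phi y) /\ phi z0 = 1.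
Proof.
have [M [M_avoid M_max]] : exists M, avoiding_subspace M /\
    forall B, (M `<` B)%classic -> ~ avoiding_subspace B.
  apply: Zorn_bigcup => F F_avoid F_chain; split.
    move=> c x y [X FX Xx] [Y FY Yy].
    have [XY|YX] := F_chain X Y FX FY.
      by exists Y => //; apply: (F_avoid Y FY).1 => //; apply: XY.
    by exists X => //; apply: (F_avoid X FX).1 => //; apply: YX.
  by move=> [X FX Xz0]; apply: (F_avoid X FX).2.
have [M0 M_compl] := maximal_avoiding_subspace_complement M_avoid M_max.
have [M_lin Mz0] := M_avoid.
pose P v (k : rat) := M (v - k *: z0).
have P_uniq v k k' : P v k -> P v k' -> k = k'.
  move=> Pk Pk'; apply/eqP; apply: contraT => k_neq.
  have := M_lin (-1) _ _ Pk' Pk; rewrite scaleN1r opprB addrA subrK -scalerBl.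
  move=> /(M_lin (k' - k)^-1 _ 0); rewrite addr0 scalerA mulVf ?scale1r; last first.
    by rewrite subr_eq0 eq_sym.
  by move=> /(_ M0).
pose phi v := epsilon (inhabits 0) (P v).
have phiP v : P v (phi v) by apply: epsilon_spec; apply: M_compl.
exists phi; split.
  move=> c x y; apply/esym/(P_uniq (c *: x + y)); last exact: phiP.
  rewrite /P; have := M_lin c _ _ (phiP x) (phiP y).
  by rewrite scalerBr scalerA addrACA -opprD -scalerDl.
by apply: (P_uniq z0); [exact: phiP | rewrite /P scale1r subrr].
Qed.

Definition line_coord : V -> rat := epsilon (inhabits (fun=> 0))
  (fun phi => (forall (c : rat) x y, phi (c *: x + y) = c * phi x + phi y) /\ phi z0 = 1).

Lemma line_coordP :
  (forall (c : rat) x y, line_coord (c *: x + y) = c * line_coord x + line_coord y) /\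
  line_coord z0 = 1.
Proof. exact: (epsilon_spec _ _ exists_linear_functional). Qed.

Lemma line_coord_lin (c : rat) x y :
  line_coord (c *: x + y) = c * line_coord x + line_coord y.
Proof. exact: line_coordP.1. Qed.

Lemma line_coord_z0 : line_coord z0 = 1.
Proof. exact: line_coordP.2. Qed.

End LinearFunctional.

Lemma pure_tensor_inj (A L : lmodType rat) (degA : int -> A -> Prop) (degL : int -> L -> Prop)
    i j (a a' : A) (z : L) :
  z != 0 -> teq degA degL [:: Tm i a j z] [:: Tm i a' j z] -> a = a'.
Proof.
move=> z_neq0 az.
pose f i' j' (b : A) w := if (i' == i) && (j' == j) then line_coord z w *: b else 0.
have f_bil : bilin_fam degA degL f.
  move=> i' j'; rewrite /f; case: (_ && _); last by split=> *; rewrite scaler0 addr0.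
  split=> *; first by rewrite scalerDr !scalerA mulrC.
  by rewrite line_coord_lin // scalerDl scalerA.
by move: (az A f f_bil); rewrite !teval_seq1 /f /= !eqxx line_coord_z0 // !scale1r.
Qed.

Section KernelOfProjection.
Variables (A : lmodType rat) (degA : int -> A -> Prop).
Variables (Lt L : lmodType rat) (degt : int -> Lt -> Prop) (degL : int -> L -> Prop).
Variables (pi : Lt -> L) (q : int) (z0 : Lt).
Hypotheses (A_graded : graded_space degA) (Lt_graded : graded_space degt)
  (L_graded : graded_space degL).
Hypothesis pi_lin : forall (c : rat) x y, pi (c *: x + y) = c *: pi x + pi y.
Hypothesis pi_deg : forall i x, degt i x -> degL i (pi x).
Hypothesis pi_surj : forall y, exists x, pi x = y.
Hypothesis ker_pi : forall z, pi z = 0 <-> exists c : rat, z = c *: z0.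
Hypotheses (z0_neq0 : z0 != 0) (z0_deg : degt q z0).

Local Notation phi := (line_coord z0).
Let phi_lin := line_coord_lin z0_neq0.
Let phi_z0 := line_coord_z0 z0_neq0.

Definition glift j y : Lt := epsilon (inhabits 0) (fun x => degt j x /\ pi x = y).

Lemma gliftP j y : degL j y -> degt j (glift j y) /\ pi (glift j y) = y.
Proof.
by move=> dy; apply: (epsilon_spec _ _ (homog_lift Lt_graded L_graded pi_lin pi_deg pi_surj dy)).
Qed.

(* Subtracting the z0-coordinate makes the section independent of the chosen
   lifts, hence linear. *)
Definition gsection j y : Lt := glift j y - (if j == q then phi (glift j y) else 0) *: z0.

Lemma gsection_pi j w : degt j w -> gsection j (pi w) = w - (if j == q then phi w else 0) *: z0.
Proof.
move=> dw; have [dx pix] := gliftP (pi_deg dw); rewrite /gsection.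
move: (glift j (pi w)) dx pix => x dx pix.
have [k xw] : exists k : rat, x - w = k *: z0 by apply/ker_pi; rewrite linB // pix subrr.
have -> : x = w + k *: z0 by rewrite -xw addrC subrK.
case: eqP => [_|j_neq_q].
  by rewrite (addrC w) phi_lin phi_z0 mulr1 scalerDl opprD addrACA subrr add0r.
have -> : k *: z0 = 0.
  apply: (homog_eq0 Lt_graded (i := j) (j := q)); last exact/eqP.
    by rewrite -xw; apply: (degB Lt_graded).
  exact: (degZ Lt_graded).
by rewrite !scale0r !subr0 addr0.
Qed.

Lemma gsection_deg j y : degL j y -> degt j (gsection j y).
Proof.
move=> dy; have [dx _] := gliftP dy; apply: (degB Lt_graded) => //.
by case: eqP => [->|_]; [apply: (degZ Lt_graded) | rewrite scale0r; apply: (deg0 Lt_graded)].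
Qed.

Lemma gsection_lin j (c : rat) y1 y2 : degL j y1 -> degL j y2 ->
  gsection j (c *: y1 + y2) = c *: gsection j y1 + gsection j y2.
Proof.
move=> d1 d2; have [dx1 <-] := gliftP d1; have [dx2 <-] := gliftP d2.
rewrite -pi_lin !gsection_pi //; last exact: (deg_lin Lt_graded).
case: eqP => _; last by rewrite !scale0r !subr0.
by rewrite phi_lin scalerDl -scalerA scalerBr opprD addrACA.
Qed.

Lemma tensor_ker_pi n (s : seq (tm A Lt)) :
  tensor_wf degA degt s -> thomog n s -> teq degA degL (tmap pi s) [::] ->
  exists c, degA (n - q) c /\ teq degA degt s [:: Tm (n - q) c q z0].
Proof.
move=> s_wf s_homog s_ker.
pose coef (x : tm A Lt) := phi (tl x) *: ta x.
have coef_deg x : List.In x s -> tdL x == q -> degA (n - q) (coef x).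
  move=> xs /eqP xq; have [dax _] := s_wf x xs.
  by rewrite -(s_homog x xs) xq addrK; apply: (degZ A_graded).
exists (\sum_(x <- s | tdL x == q) coef x); split; first exact: (deg_sum A_graded).
move=> W f f_bil; pose g i j a y := f i j a (gsection j y).
have g_bil : bilin_fam degA degL g.
  move=> i j; split=> [c a1 a2 y d1 d2 dy | c a y1 y2 da d1 d2]; rewrite /g.
    by rewrite (f_bil i j).1 //; apply: gsection_deg.
  by rewrite gsection_lin // (f_bil i j).2 //; apply: gsection_deg.
have g_pi x : List.In x s -> g (tdA x) (tdL x) (ta x) (pi (tl x)) =
    f (tdA x) (tdL x) (ta x) (tl x) - (if tdL x == q then f (n - q) q (coef x) z0 else 0).
  move=> xs; have [dax dlx] := s_wf x xs; rewrite /g gsection_pi //.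
  case: eqP => [xq|_]; last by rewrite scale0r !subr0.
  have xa : tdA x = n - q by rewrite -(s_homog x xs) xq addrK.
  rewrite xq xa in dax dlx *.
  rewrite (bfBr f_bil) ?(bfZr Lt_graded f_bil) ?(bfZl A_graded f_bil) //.
  exact: (degZ Lt_graded).
rewrite teval_seq1 /= (bf_suml A_graded f_bil) //.
move: (s_ker W g g_bil); rewrite /teval big_nil big_map (eq_bigr_In g_pi) sumrB -big_mkcond /=.
by move/eqP; rewrite subr_eq0 => /eqP.
Qed.

End KernelOfProjection.

Section Lifts.
Variables (A : algType rat) (degA : int -> A -> Prop) (dA : A -> A).
Variables (Lt : lmodType rat) (degt : int -> Lt -> Prop) (brt : Lt -> Lt -> Lt) (dt : Lt -> Lt).
Variables (L : lmodType rat) (degL : int -> L -> Prop) (brL : L -> L -> L) (dL : L -> L).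
Variables (pi : Lt -> L) (q : int) (z0 : Lt) (alpha : seq (tm A L)).
Hypotheses (A_cdga : is_cdga degA dA) (Lt_dgla : is_dgla degt brt dt)
  (L_dgla : is_dgla degL brL dL).
Hypothesis pi_lin : forall (c : rat) x y, pi (c *: x + y) = c *: pi x + pi y.
Hypothesis pi_deg : forall i x, degt i x -> degL i (pi x).
Hypothesis pi_br : forall x y, pi (brt x y) = brL (pi x) (pi y).
Hypothesis pi_d : forall x, pi (dt x) = dL (pi x).
Hypothesis pi_surj : forall y, exists x, pi x = y.
Hypothesis ker_pi : forall z, pi z = 0 <-> exists c : rat, z = c *: z0.
Hypotheses (z0_neq0 : z0 != 0) (z0_deg : degt q z0) (dt_z0 : dt z0 = 0).
Hypothesis z0_central : forall x, brt z0 x = 0 /\ brt x z0 = 0.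
Hypotheses (alpha_wf : tensor_wf degA degL alpha)
  (alpha_MC : teq degA degL (MCF dA brL dL alpha) [::]).

Let A_graded := cdga_graded A_cdga.
Let ker_tmap := tensor_ker_pi A_graded (dgla_graded Lt_dgla) (dgla_graded L_dgla)
  pi_lin pi_deg pi_surj ker_pi z0_neq0 z0_deg.

Lemma MCF_lift_in_Z s :
  tensor_wf degA degt s -> deg1_plus s -> teq degA degL (tmap pi s) alpha ->
  exists c, degA (2 - q) c /\ teq degA degt (MCF dA brt dt s) [:: Tm (2 - q) c q z0].
Proof.
move=> s_wf s1 s_lift; apply: ker_tmap; [exact: wf_MCF | exact/thomog_MCF/thomog_deg1 |].
rewrite (tmap_MCF _ _ pi_d pi_br); apply: teq_trans alpha_MC.
exact: teq_MCF (wf_tmap pi_deg s_wf) alpha_wf s_lift.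
Qed.

Lemma lifts_differ_in_Z s s1 :
  tensor_wf degA degt s -> deg1_plus s -> teq degA degL (tmap pi s) alpha ->
  tensor_wf degA degt s1 -> deg1_plus s1 -> teq degA degL (tmap pi s1) alpha ->
  exists b, degA (1 - q) b /\ teq degA degt s (s1 ++ [:: Tm (1 - q) b q z0]).
Proof.
move=> s_wf s_deg1 s_lift s1_wf s1_deg1 s1_lift.
have [b [b_deg s_s1]] : exists b, degA (1 - q) b /\
    teq degA degt (s ++ tscale (-1) s1) [:: Tm (1 - q) b q z0].
  apply: ker_tmap; first by apply: wf_cat => //; apply: (wf_tscale A_graded).
    by apply: thomog_cat; [apply: thomog_deg1 | apply/thomog_tscale/thomog_deg1].
  move=> W f f_bil; rewrite tmap_cat tmap_tscale teval_cat (teval_tscale A_graded f_bil).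
    by rewrite (s_lift W f f_bil) (s1_lift W f f_bil) scaleN1r subrr /teval big_nil.
  exact: wf_tmap pi_deg s1_wf.
exists b; split=> // W f f_bil; rewrite teval_cat -(s_s1 W f f_bil) teval_cat.
by rewrite (teval_tscale A_graded f_bil) // scaleN1r addrCA subrr addr0.
Qed.

Lemma MCF_lifts_cohomologous s s1 c c1 :
  tensor_wf degA degt s -> deg1_plus s -> teq degA degL (tmap pi s) alpha ->
  tensor_wf degA degt s1 -> deg1_plus s1 -> teq degA degL (tmap pi s1) alpha ->
  degA (2 - q) c1 ->
  teq degA degt (MCF dA brt dt s) [:: Tm (2 - q) c q z0] ->
  teq degA degt (MCF dA brt dt s1) [:: Tm (2 - q) c1 q z0] ->
  exists b, degA (1 - q) b /\ c = c1 + dA b.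
Proof.
move=> s_wf s_deg1 s_lift s1_wf s1_deg1 s1_lift c1_deg Fc Fc1.
have [b [b_deg s_s1]] := lifts_differ_in_Z s_wf s_deg1 s_lift s1_wf s1_deg1 s1_lift.
have s1b_wf : tensor_wf degA degt (s1 ++ [:: Tm (1 - q) b q z0]).
  by apply: wf_cat => // x [<-|[]].
have deg_db : 1 - q + 1 = 2 - q by rewrite addrAC.
have F_s : teq degA degt (MCF dA brt dt s) (MCF dA brt dt s1 ++ [:: Tm (2 - q) (dA b) q z0]).
  rewrite -deg_db; apply: teq_trans (teq_MCF A_cdga Lt_dgla s_wf s1b_wf s_s1) _.
  apply: (MCF_cat_central A_cdga Lt_dgla s1_wf b_deg z0_deg dt_z0 z0_central).
exists b; split=> //; apply: (pure_tensor_inj z0_neq0).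
apply: teq_trans (teq_sym Fc) (teq_trans F_s (teq_trans (teq_cat Fc1 (teq_refl _)) _)).
apply: teq_pure_tensorD A_graded (dgla_graded Lt_dgla) c1_deg _ z0_deg.
by rewrite -deg_db; apply: cdga_d_deg A_cdga _ _ b_deg.
Qed.

End Lifts.

Unset Implicit Arguments. Set Strict Implicit.

Theorem lemma3p4
  (A : algType rat) (degA : int -> A -> Prop) (dA : A -> A)
  (Lt : lmodType rat) (degt : int -> Lt -> Prop) (brt : Lt -> Lt -> Lt) (dt : Lt -> Lt)
  (L : lmodType rat) (degL : int -> L -> Prop) (brL : L -> L -> L) (dL : L -> L)
  (pi : Lt -> L) (q : int) (z0 : Lt)
  (alpha : seq (tm A L)) (alphat alphat1 : seq (tm A Lt)) :
  is_cdga degA dA ->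
  MC_product_data degt brt dt degL brL dL pi q z0 ->
  (* alpha is a Maurer-Cartan element of A^+ (x) L *)
  tensor_wf degA degL alpha -> deg1_plus alpha ->
  teq degA degL (MCF dA brL dL alpha) [::] ->
  (* alphat, alphat1 are degree-one lifts of alpha in A^+ (x) Lt *)
  tensor_wf degA degt alphat -> deg1_plus alphat ->
  teq degA degL (tmap pi alphat) alpha ->
  tensor_wf degA degt alphat1 -> deg1_plus alphat1 ->
  teq degA degL (tmap pi alphat1) alpha ->
  (* F(alphat), F(alphat1) lie in A^+ (x) Z = A^+ (x) Q z0 ... *)
  (exists c, degA (2 - q) c /\ teq degA degt (MCF dA brt dt alphat) [:: Tm (2 - q) c q z0]) /\
  (exists c1, degA (2 - q) c1 /\ teq degA degt (MCF dA brt dt alphat1) [:: Tm (2 - q) c1 q z0]) /\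
  (* ... and the corresponding elements of A^(2-q) are cohomologous *)
  (forall c c1, degA (2 - q) c -> degA (2 - q) c1 ->
     teq degA degt (MCF dA brt dt alphat) [:: Tm (2 - q) c q z0] ->
     teq degA degt (MCF dA brt dt alphat1) [:: Tm (2 - q) c1 q z0] ->
     exists b, degA (1 - q) b /\ dA b = c - c1).
Proof.
move=> A_cdga [[Lt_dgla [L_dgla _]] [pi_lin pi_deg pi_br pi_d pi_surj] [Z_central Z_closed _]
  [_ z0_neq0 z0_deg ker_pi]] alpha_wf _ alpha_MC at_wf at_deg1 at_lift at1_wf at1_deg1 at1_lift.
have pi_z0 : pi z0 = 0 by apply/ker_pi; exists 1; rewrite scale1r.
have F_lift := MCF_lift_in_Z A_cdga Lt_dgla L_dgla pi_lin pi_deg pi_br pi_d pi_surj ker_pi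
  z0_neq0 z0_deg alpha_wf alpha_MC.
split; [exact: F_lift | split; [exact: F_lift |]].
move=> c c1 _ c1_deg Fc Fc1.
have [b [b_deg ->]] := MCF_lifts_cohomologous A_cdga Lt_dgla L_dgla pi_lin pi_deg pi_surj ker_pi
  z0_neq0 z0_deg (Z_closed z0 pi_z0) (fun x => Z_central z0 x pi_z0)
  at_wf at_deg1 at_lift at1_wf at1_deg1 at1_lift c1_deg Fc Fc1.
by exists b; rewrite addrAC subrr add0r.
Qed.
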